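(* Every word-representable graph $G=(V,E)$ admits a border-free word representing it, i.e. a word $w$ representing $G$ that cannot be written as $w=uvu$ with $u$ non-empty.
   Context: A graph $G=(V,E)$ is word-representable if there is a word $w$ over the alphabet $V$, containing every letter of $V$, such that for all distinct $x,y\in V$, the letters $x$ and $y$ alternate in $w$ (i.e. deleting all letters other than $x,y$ from $w$ yields a word of the form $xyxy\cdots$ or $yxyx\cdots$, of even or odd length) if and only if $xy\in E$; such $w$ is said to represent $G$. A word $w$ is bordered if $w=uvu$ for some words $u,v$ with $u$ non-empty; otherwise it is border-free. *)

From mathcomp Require Import all_boot.
Set Implicit Arguments. Unset Strict Implicit. Unset Printing Implicit Defensive.

Definition simple_graph (V : finType) (e : rel V) : Prop :=
  symmetric e /\ irreflexive e.

Definition alternate (V : eqType) (w : seq V) (x y : V) : bool :=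
  sorted (fun a b : V => a != b) [seq z <- w | (z == x) || (z == y)].

Definition represents (V : finType) (e : rel V) (w : seq V) : Prop :=
  (forall v : V, v \in w) /\
  (forall x y : V, x != y -> (alternate w x y <-> e x y)).

Definition word_representable (V : finType) (e : rel V) : Prop :=
  exists w : seq V, represents e w.

Definition bordered (V : eqType) (w : seq V) : Prop :=
  exists u v : seq V, u <> [::] /\ w = u ++ v ++ u.

Definition border_free (V : eqType) (w : seq V) : Prop := ~ bordered w.

From mathcomp Require Import all_boot zify.
From Stdlib Require Import Classical.
Set Implicit Arguments. Unset Strict Implicit. Unset Printing Implicit Defensive.

(* First make the representant uniform: appending, round by round, one copy
   of each letter that occurs fewer than [size w] times keeps every
   alternation, and ends with all letters equally frequent.  A balanced
   alternating two-letter word is alternating also as a cyclic word, so every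
   cyclic shift of a uniform representant is again one.  Now take a uniform
   representant that is shortest and, among those, lexicographically least.
   If it were [u ++ v ++ u] with [u] nonempty, comparing it with its shifts
   [v ++ u ++ u] and [u ++ u ++ v] gives [u ++ v = v ++ u]; hence [u] and [v]
   are powers of a common word [z], the representant is a proper power of
   [z], and [z] is a shorter uniform representant. *)

Section Powers.
Variable T : Type.

Fixpoint catn (n : nat) (z : seq T) : seq T :=
  if n is n'.+1 then z ++ catn n' z else [::].

Lemma catnD m n z : catn (m + n) z = catn m z ++ catn n z.
Proof. by elim: m => //= m ->; rewrite catA. Qed.

Lemma size_catn n z : size (catn n z) = n * size z.
Proof. by elim: n => //= n IHn; rewrite size_cat IHn mulSn. Qed.

Lemma sorted_catn (r : rel T) n z : cycle r z -> sorted r (catn n z).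
Proof.
case: z => [|a t]; first by elim: n.
rewrite /= rcons_path => /andP[path_t r_last].
case: n => //= n; elim: n => /= [|n IHn]; first by rewrite cats0.
by rewrite cat_path path_t /= r_last.
Qed.

Lemma commute_catn (u v : seq T) : u ++ v = v ++ u ->
  exists z a b, u = catn a z /\ v = catn b z.
Proof.
have [n] := ubnP (size u + size v); elim: n u v => // n IHn u v.
wlog le_uv : u v / size u <= size v.
  move=> W lt_uvn uvC; have [|/ltnW le_vu] := leqP (size u) (size v).
    by move/W; apply.
  have [|z [a [b [-> ->]]]] := W v u le_vu _ (esym uvC); first by rewrite addnC.
  by exists z, b, a.
case: u le_uv => [|c u'] le_uv lt_uvn uvC; first by exists v, 0, 1; rewrite /= cats0.
set u := c :: u' in le_uv lt_uvn uvC *.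
have def_v : v = u ++ drop (size u) v.
  have take_v : take (size u) v = u by rewrite -(takel_cat u le_uv) -uvC take_size_cat.
  by rewrite -{1}[v](cat_take_drop (size u)) take_v.
have uv'C : u ++ drop (size u) v = drop (size u) v ++ u.
  have := congr1 (drop (size u)) uvC; rewrite drop_size_cat // {2}def_v -catA drop_size_cat //.
  by rewrite -def_v.
have [|z [a [b [def_u def_v']]]] := IHn _ _ _ uv'C.
  by move: le_uv lt_uvn; rewrite size_drop /u /=; lia.
by exists z, a, (a + b); rewrite catnD -def_u -def_v' -def_v.
Qed.

End Powers.

Section Alternation.
Variable T : eqType.
Implicit Types (x y a b : T) (s t w z : seq T).
Local Notation neq := (fun a b : T => a != b).

Lemma pred2C x y : pred2 x y =1 pred2 y x.
Proof. by move=> z; rewrite /= orbC. Qed.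

Lemma alternateE w x y : alternate w x y = sorted neq (filter (pred2 x y) w).
Proof. by []. Qed.

Lemma alternateC w x y : alternate w x y = alternate w y x.
Proof. by rewrite !alternateE (eq_filter (pred2C x y)). Qed.

Lemma count_filter_pred2 x y a w : pred2 x y a ->
  count_mem a (filter (pred2 x y) w) = count_mem a w.
Proof. by move=> xy_a; rewrite count_filter; apply: eq_count => b /=; case: eqP => // ->. Qed.

Lemma alternating_path_count a b t : a != b -> all (pred2 a b) t -> path neq a t ->
  count_mem a (a :: t) = count_mem b (a :: t) + odd (size (a :: t)) /\
  last a t = (if odd (size (a :: t)) then a else b).
Proof.
elim: t a b => [|c t IHt] a b ab /=; first by rewrite eqxx (negbTE ab).
case/andP=> /orP[/eqP->|/eqP->] t_ab /andP[ac path_t]; first by rewrite eqxx in ac.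
have ba : b != a by rewrite eq_sym.
have [] := IHt b a ba _ path_t; first by rewrite -(eq_all (pred2C a b)).
rewrite /= !eqxx (negbTE ab) (negbTE ba) /=.
by case: (odd (size t)) => /= -> ->; rewrite ?addn0 ?addn1.
Qed.

Lemma balanced_sorted_cycle x y s : x != y -> all (pred2 x y) s ->
  count_mem x s = count_mem y s -> sorted neq s = cycle neq s.
Proof.
case: s => [//|a t] xy /= /andP[a_xy t_xy] cnt_xy.
rewrite rcons_path; case path_t: (path neq a t) => //=; symmetry.
wlog a_x : x y xy a_xy t_xy cnt_xy / a = x.
  move=> W; case/orP: (a_xy) => /eqP a_eq; first exact: (W x y).
  apply: (W y x) => //; first by rewrite eq_sym.
  - by rewrite orbC.
  - by rewrite -(eq_all (pred2C x y)).
subst a; have [cnt_t last_t] := alternating_path_count xy t_xy path_t.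
move: cnt_t => /=; rewrite cnt_xy last_t /=.
by case: (odd (size t)) => /= ?; [rewrite eq_sym | lia].
Qed.

Lemma sorted_rcons_minority x y s : x != y -> all (pred2 x y) s ->
  count_mem x s < count_mem y s -> sorted neq s -> sorted neq (rcons s x).
Proof.
case: s => [|a t] xy; first by rewrite ltnn.
move=> /= /andP[a_xy t_xy] lt_xy path_t; rewrite rcons_path path_t /=.
case/orP: a_xy => /eqP a_eq; subst a.
  by have [cnt_t _] := alternating_path_count xy t_xy path_t; move: lt_xy cnt_t => /=; lia.
have yx : y != x by rewrite eq_sym.
have [|cnt_t ->] := alternating_path_count yx _ path_t.
  by rewrite -(eq_all (pred2C x y)).
move: lt_xy cnt_t => /=; case: (odd (size t)) => /=; [lia | by rewrite eq_sym].
Qed.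

Lemma last_undup x0 s : s != [::] -> last x0 (undup s) = last x0 s.
Proof. by case/lastP: s => // s c _; rewrite undup_rcons !last_rcons. Qed.

Lemma uniq_sorted_neq s : uniq s -> sorted neq s.
Proof. by rewrite uniq_pairwise => /pairwise_sorted. Qed.

(* MathComp's [undup] keeps the last occurrence of each letter, so it starts
   with a letter different from the last letter of [s]. *)
Lemma sorted_cat_undup x y s : x != y -> x \in s -> y \in s ->
  sorted neq s -> sorted neq (s ++ undup s).
Proof.
case: s => [//|c t] xy x_s y_s sorted_s.
have := last_undup c (isT : c :: t != [::]); have := undup_uniq (c :: t).
have x_u : x \in undup (c :: t) by rewrite mem_undup.
have y_u : y \in undup (c :: t) by rewrite mem_undup.
case: (undup (c :: t)) x_u y_u => [//|d g] x_g y_g /= /andP[d_g uniq_g] last_g.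
rewrite cat_path -last_g; move: sorted_s => /= -> /=.
have /= -> : sorted neq (d :: g) by apply: uniq_sorted_neq; rewrite /= d_g.
rewrite andbT; case: g {x_s y_s uniq_g last_g} x_g y_g d_g => [|h g] x_g y_g d_g.
  by move: x_g y_g xy; rewrite !inE => /eqP-> /eqP->; rewrite eqxx.
by apply: contraNneq d_g => <-; exact: mem_last h g.
Qed.

Lemma filter_catn (p : pred T) n z : filter p (catn n z) = catn n (filter p z).
Proof. by elim: n => //= n IHn; rewrite filter_cat IHn. Qed.

Lemma count_catn (p : pred T) n z : count p (catn n z) = n * count p z.
Proof. by elim: n => //= n IHn; rewrite count_cat IHn mulSn. Qed.

Lemma mem_catn n z : catn n.+1 z =i z.
Proof. by move=> x; elim: n => /= [|n]; rewrite ?cats0 // !mem_cat => ->; rewrite orbb. Qed.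

Lemma balanced_filter_pred2 x y w : count_mem x w = count_mem y w ->
  count_mem x (filter (pred2 x y) w) = count_mem y (filter (pred2 x y) w).
Proof. by rewrite !count_filter_pred2 //= eqxx ?orbT. Qed.

Lemma alternate_catn x y n z : x != y -> count_mem x z = count_mem y z ->
  alternate (catn n.+1 z) x y = alternate z x y.
Proof.
move=> xy /balanced_filter_pred2 cnt_xy; rewrite !alternateE filter_catn.
apply/idP/idP => [/cat_sorted2[] //|].
by rewrite (balanced_sorted_cycle xy (filter_all _ _) cnt_xy); apply: sorted_catn.
Qed.

Lemma alternate_catC x y u v : x != y -> count_mem x (u ++ v) = count_mem y (u ++ v) ->
  alternate (v ++ u) x y = alternate (u ++ v) x y.
Proof.
move=> xy /balanced_filter_pred2; rewrite !alternateE !filter_cat => cnt_uv.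
set f := filter _ u; set g := filter _ v.
have all_fg : all (pred2 x y) (f ++ g) by rewrite -filter_cat filter_all.
rewrite (balanced_sorted_cycle xy all_fg cnt_uv) (balanced_sorted_cycle xy); last 2 first.
- by rewrite all_cat andbC -all_cat.
- by move: cnt_uv; rewrite !count_cat addnC (addnC (count _ f)).
by rewrite -rot_size_cat rot_cycle.
Qed.

End Alternation.

Section Padding.
Variable T : eqType.
Implicit Types (x y : T) (w : seq T).

Definition pad M w := w ++ [seq z <- undup w | count_mem z w < M].

Lemma mem_pad M w : pad M w =i w.
Proof. by move=> x; rewrite mem_cat mem_filter mem_undup; case: (x \in w); rewrite ?andbF. Qed.

Lemma count_pad M w x : x \in w ->
  count_mem x (pad M w) = count_mem x w + (count_mem x w < M).
Proof.
move=> x_w; rewrite count_cat count_filter; congr (_ + _).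
have [lt_xM | le_Mx] := ltnP (count_mem x w) M.
  rewrite (eq_count (a2 := pred1 x)) ?count_uniq_mem ?undup_uniq ?mem_undup ?x_w //.
  by move=> z /=; case: eqP => // ->.
rewrite (eq_count (a2 := pred0)) ?count_pred0 // => z /=.
by case: eqP => // ->; rewrite ltnNge le_Mx.
Qed.

Lemma alternate_pad M w x y : x != y -> x \in w -> y \in w ->
  alternate (pad M w) x y = alternate w x y.
Proof.
move=> xy; wlog le_xy : x y xy / count_mem x w <= count_mem y w.
  move=> W x_w y_w; have [/W|/ltnW le_yx] := leqP (count_mem x w) (count_mem y w); first exact.
  by rewrite !(alternateC _ x y); apply: W; rewrite // eq_sym.
move=> x_w y_w; rewrite !alternateE filter_cat.
set S := fun z => count_mem z w < M; set f := filter (pred2 x y) w.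
have -> : filter (pred2 x y) (filter S (undup w)) = filter S (undup f).
  by rewrite -filter_undup -!filter_predI; apply: eq_filter => z /=; rewrite andbC.
have x_f : x \in f by rewrite mem_filter /= eqxx.
have y_f : y \in f by rewrite mem_filter /= eqxx orbT.
have in_f z : z \in undup f -> z = x \/ z = y.
  by rewrite mem_undup mem_filter => /andP[/orP[]/eqP]; [left | right].
apply/idP/idP => [/cat_sorted2[] // | sorted_f].
have [lt_yM | le_My] := ltnP (count_mem y w) M.
  have -> : filter S (undup f) = undup f.
    by apply/all_filterP/allP => z /in_f[]->; rewrite /S; lia.
  exact: sorted_cat_undup xy x_f y_f sorted_f.
have [lt_xM | le_Mx] := ltnP (count_mem x w) M.
  have -> : filter S (undup f) = [:: x].
    rewrite -(filter_pred1_uniq (undup_uniq f)) ?mem_undup //.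
    by apply: eq_in_filter => z /in_f[]->; rewrite /S /= ?eqxx 1?eq_sym ?(negbTE xy); lia.
  rewrite cats1; apply: (sorted_rcons_minority xy) => //; first exact: filter_all.
  by rewrite !count_filter_pred2 /= ?eqxx ?orbT //; lia.
have -> : filter S (undup f) = [::].
  by rewrite -(filter_pred0 (undup f)); apply: eq_in_filter => z /in_f[]->; rewrite /S /=; lia.
by rewrite cats0.
Qed.

Lemma mem_iter_pad M j w : iter j (pad M) w =i w.
Proof. by elim: j => //= j IHj x; rewrite mem_pad IHj. Qed.

Lemma count_iter_pad M j w x : x \in w -> count_mem x w <= M ->
  count_mem x (iter j (pad M) w) = minn M (count_mem x w + j).
Proof.
move=> x_w le_xM; elim: j => [|j IHj] /=; first by rewrite addn0; lia.
rewrite count_pad ?mem_iter_pad // IHj.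
by case: ltnP => /=; lia.
Qed.

Lemma alternate_iter_pad M j w x y : x != y -> x \in w -> y \in w ->
  alternate (iter j (pad M) w) x y = alternate w x y.
Proof. by move=> xy x_w y_w; elim: j => //= j IHj; rewrite alternate_pad ?mem_iter_pad. Qed.

End Padding.

Section Representation.
Variables (V : finType) (e : rel V).
Implicit Types (u v w z : seq V).

Definition uniform w := forall x y : V, count_mem x w = count_mem y w.

Definition uniform_rep w := represents e w /\ uniform w.

Lemma uniform_rep_catC u v : uniform_rep (u ++ v) -> uniform_rep (v ++ u).
Proof.
case=> [[mem_uv alt_uv] unif_uv]; split; [split|].
- by move=> x; rewrite mem_cat orbC -mem_cat.
- by move=> x y xy; rewrite alternate_catC //; apply: alt_uv.
- by move=> x y; rewrite !count_cat addnC (addnC (count_mem y v)) -!count_cat.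
Qed.

Lemma uniform_rep_root n z : uniform_rep (catn n.+1 z) -> uniform_rep z.
Proof.
case=> [[mem_zn alt_zn] unif_zn].
have unif_z : uniform z.
  by move=> x y; apply/eqP; rewrite -(eqn_pmul2l (ltn0Sn n)) -!count_catn (unif_zn x y).
split=> //; split=> [x | x y xy]; first by rewrite -(mem_catn n).
by rewrite -alt_zn // alternate_catn.
Qed.

Lemma uniform_rep_exists w : represents e w -> exists w', uniform_rep w'.
Proof.
case=> mem_w alt_w; exists (iter (size w) (pad (size w)) w).
have count_w x : count_mem x (iter (size w) (pad (size w)) w) = size w.
  by rewrite count_iter_pad ?count_size //; lia.
split=> [|x y]; last by rewrite !count_w.
split=> [x | x y xy]; first by rewrite mem_iter_pad.
by rewrite alternate_iter_pad // alt_w.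
Qed.

End Representation.

Section Code.
Variable V : finType.
Implicit Types (x : V) (r s t : seq V).

(* Reads [s] as a numeral in base [#|V|]; injective on words of a fixed length. *)
Definition code s : nat := foldl (fun c x => c * #|V| + enum_rank x) 0 s.

Lemma code_cat s t : code (s ++ t) = code s * #|V| ^ size t + code t.
Proof.
rewrite /code foldl_cat; move: (foldl _ 0 s) => c.
elim: t c => [|x t IHt] c /=; first by rewrite muln1 addn0.
by rewrite IHt [in RHS]IHt expnS mul0n add0n mulnDl mulnA addnA.
Qed.

Lemma code_rcons s x : code (rcons s x) = code s * #|V| + enum_rank x.
Proof. by rewrite -cats1 code_cat. Qed.

Lemma code_inj s t : size s = size t -> code s = code t -> s = t.
Proof.
elim/last_ind: s t => [|s x IHs] t; first by case: t.
case/lastP: t => [|t y]; rewrite ?size_rcons // => -[size_st].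
have lt_x := ltn_ord (enum_rank x); have lt_y := ltn_ord (enum_rank y).
rewrite !code_rcons => code_st.
have /ord_inj/enum_rank_inj -> : enum_rank x = enum_rank y :> nat.
  by have := congr1 (modn^~ #|V|) code_st; rewrite /= !modnMDl !modn_small.
congr rcons; apply: IHs size_st _.
have V_gt0 : 0 < #|V| := leq_ltn_trans (leq0n _) lt_x.
by have := congr1 (divn^~ #|V|) code_st; rewrite /= !divnMDl // !divn_small // !addn0.
Qed.

Lemma ltn_code_catl r s t : code s < code t -> code (s ++ r) < code (t ++ r).
Proof.
move=> lt_st; rewrite !code_cat ltn_add2r ltn_pmul2r // expn_gt0.
by case: r => [|x r]; rewrite ?orbT // (leq_ltn_trans _ (ltn_ord (enum_rank x))).
Qed.

Lemma ltn_code_catr r s t : size s = size t -> code s < code t ->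
  code (r ++ s) < code (r ++ t).
Proof. by move=> size_st lt_st; rewrite !code_cat size_st ltn_add2l. Qed.

End Code.

Section BorderFree.
Variables (V : finType) (e : rel V).
Implicit Types w : seq V.

Lemma bordered_uniform_rep_descent w : uniform_rep e w -> bordered w ->
  exists2 w', uniform_rep e w' &
    size w' < size w \/ size w' = size w /\ code w' < code w.
Proof.
move=> rep_w [u [v [u_nil def_w]]]; subst w.
have size_uv : size (u ++ v) = size (v ++ u) by rewrite !size_cat addnC.
have [lt_vu | lt_uv | eq_uv] := ltngtP (code (v ++ u)) (code (u ++ v)).
- exists ((v ++ u) ++ u); first exact: uniform_rep_catC.
  by right; split; [rewrite !size_cat; lia | rewrite catA ltn_code_catl].
- exists (u ++ u ++ v); first by apply: uniform_rep_catC; rewrite -catA.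
  by right; split; [rewrite !size_cat; lia | exact: ltn_code_catr].
have [z [[|a] [b [def_u def_v]]]] := commute_catn (code_inj size_uv (esym eq_uv)).
  by rewrite def_u in u_nil.
have u_gt0 : 0 < size u by case: (u) u_nil.
exists z.
  apply: (uniform_rep_root (n := a + b + a.+1)).
  by rewrite -addnA -addSn !catnD -def_u -def_v.
by left; move: u_gt0; rewrite !size_cat def_u def_v !size_catn; nia.
Qed.

Lemma uniform_rep_border_free w : uniform_rep e w ->
  exists w', represents e w' /\ border_free w'.
Proof.
have [n] := ubnP (size w); have [c] := ubnP (code w).
elim: n c w => // n IHn c; elim: c => // c IHc w lt_wc lt_wn rep_w.
have [bord_w | free_w] := classic (bordered w); last by exists w; case: rep_w.
have [w' rep_w' [lt_size | [eq_size lt_code]]] := bordered_uniform_rep_descent rep_w bord_w.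
  by apply: (IHn (code w').+1 w') => //; lia.
by apply: IHc rep_w'; lia.
Qed.

End BorderFree.

Theorem mainTheorem1 (V : finType) (e : rel V) :
  simple_graph e -> word_representable e ->
  exists w : seq V, represents e w /\ border_free w.
Proof.
move=> _ [w /uniform_rep_exists [w' rep_w']].
exact: uniform_rep_border_free rep_w'.
Qed.
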